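(* Let $s\geqslant1$. (1) The Markov rule fails in $\mathcal B_s$: there is an evaluated formula $\varphi(x)$ of $L_s$ (free number variable $x$, other parameters replaced by elements of the domains) such that $\mathcal B_s\Vdash\forall x[\varphi(x)\vee\neg\varphi(x)]$ and $\mathcal B_s\Vdash\neg\neg\exists x\varphi(x)$, but not $\mathcal B_s\Vdash\exists x\varphi(x)$. (2) Markov's principle fails in $\mathcal B_s$: for such a $\varphi$, $\mathcal B_s\not\Vdash\forall x[\varphi(x)\vee\neg\varphi(x)]\wedge\neg\neg\exists x\varphi(x)\supset\exists x\varphi(x)$.
   Context: Language $L_s$ ($s\geqslant1$): variables $x,y,\dots$ (type 0), and for $1\leqslant n\leqslant s$: $F^n$ ($n$-functionals), $A^n$ (lawlike), $\mathcal F^n$ (lawless), of type $n$; constants $0,K^n$; function symbols $S,+,\cdot,N^n,Ap^n$ ($Z(t)=Ap(Z,t)$ lowers type by 1; a 1-functional applied to a term is a term); atomic formulas $t=_0\tau$, $Z=_nV$; connectives $\bot,\wedge,\vee,\supset$, quantifiers; $\neg\varphi:=\varphi\supset\bot$; terms for primitive recursive functions/relations (e.g. bounded quantifiers, $<$) are available by the usual definitions. Beth model $\mathcal{B}_s$: path = maximal chain. $a_0=\omega$, $d_0=\{\langle x\rangle:x\in\omega^*\}$ ordered by extension ($\langle x\rangle\preccurlyeq_0\langle y\rangle$ iff $y$ is an initial segment of $x$). For $k\geqslant1$: $a_k$ = partial $f:d_{k-1}\times\omega\dashrightarrow a_{k-1}$, monotonic ($y\preccurlyeq_{k-1}x\Rightarrow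 f(x,\cdot)\subseteq f(y,\cdot)$) and complete (along every path of $d_{k-1}$ the union of $f(x,\cdot)$ is total); $d_k$ = tuples $\langle x_0,\dots,x_k\rangle$ of sequences of common length $m=lh$ with $x_i\in a_i^{(m)}$, ordered componentwise by extension. Nodes $M=d_{s-1}$, root $\varepsilon=\langle\langle\rangle,\dots,\langle\rangle\rangle$, $\bar\alpha(k)=\langle\alpha_0,\dots,\alpha_{k-1}\rangle$. Domains $\omega$, $a_k$, $b_k=\{f\in a_k:f(\text{root},\cdot)\text{ total}\}$, $l_k=\{\nu_k(\xi)\}$ with $\xi:\omega\times a_{k-1}\to a_{k-1}$, all $\xi(n,\cdot)$ bijective, $\nu_k(\xi)(x,n)=\xi(n,\langle\langle x\rangle_{k-1}\rangle_n)$ for $n<lh(x)$, else undefined. $\widehat K^1(x,n)=0$, $\widehat K^{k+1}(x,n)=\widehat K^k$; usual $0,S,+,\cdot$; $N^k\mapsto S^k$ ($S^0(x)=x+1$, $S^{n+1}(f)=S^n\circ f$); at node $\alpha$, $Ap^k(f,n)=f(\bar\alpha(k),n)$. $Val(\alpha,Z=V)=T$ iff both values at $\alpha$ defined and equal. Beth forcing: atomic, $\vee$, $\exists$ require every path through $\alpha$ to meet a node where the valuation holds / a disjunct / an instance is forced; $\supset$: every later node (including $\alpha$) forcing the antecedent forces the consequent; $\wedge,\forall$ pointwise; $\bot$ never forced; $\mathcal B_s\Vdash\varphi$ iff $\varepsilon\Vdash\varphi$. *)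

From Stdlib Require Import PeanoNat.
From mathcomp Require Import all_boot.

Definition prefix {T : Type} (x y : seq T) : Prop := exists z, y = x ++ z.

Definition init {T : Type} (beta : nat -> T) (m : nat) : seq T := mkseq beta m.

Definition monotonic {T B : Type} (f : seq T -> nat -> option B) : Prop :=
  forall x y, prefix x y -> forall n b, f x n = Some b -> f y n = Some b.

Definition complete {T B : Type} (f : seq T -> nat -> option B) : Prop :=
  forall beta : nat -> T, forall n, exists m b, f (init beta m) n = Some b.

(* stage k = (a_k, Tup k), where Tup k = a_0 * ... * a_k ("one step" of a node
   of d_k); a node of d_k of length m is a sequence of m such tuples, i.e. the
   tuple <x_0,...,x_k> of sequences of common length m, x_i in a_i^(m). *)
Fixpoint stage (k : nat) : Type * Type :=
  match k with
  | 0 => (nat : Type, nat : Type)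
  | S k' =>
      let Ak := (stage k').1 in
      let Tk := (stage k').2 in
      let An := {f : seq Tk -> nat -> option Ak | monotonic f /\ complete f} in
      (An, (Tk * An)%type)
  end.

Definition A (k : nat) : Type := (stage k).1.
Definition Tup (k : nat) : Type := (stage k).2.
Definition D (k : nat) : Type := seq (Tup k).

Definition app {k : nat} (f : A k.+1) : D k -> nat -> option (A k) :=
  proj1_sig (f : {f : seq (Tup k) -> nat -> option (A k) | monotonic f /\ complete f}).

Lemma const_ok {T B : Type} (b : B) :
  monotonic (fun (_ : seq T) (_ : nat) => Some b) /\
  complete (fun (_ : seq T) (_ : nat) => Some b).
Proof. split; [by move=> x y _ n c -> | by move=> beta n; exists 0, b]. Qed.

Lemma map_ok {T B C : Type} (g : B -> C) (f : seq T -> nat -> option B) :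
  monotonic f /\ complete f ->
  monotonic (fun x n => omap g (f x n)) /\ complete (fun x n => omap g (f x n)).
Proof.
move=> [Hm Hc]; split.
- move=> x y Hxy n c; case E: (f x n) => [b|] //= [<-].
  by rewrite (Hm _ _ Hxy _ _ E).
- move=> beta n; have [m [b E]] := Hc beta n.
  by exists m, (g b); rewrite E.
Qed.

Fixpoint Kval (k : nat) : A k :=
  match k return A k with
  | 0 => 0
  | S k' => exist _ (fun (_ : seq (Tup k')) (_ : nat) => Some (Kval k')) (const_ok _)
  end.

Fixpoint Sval (k : nat) : A k -> A k :=
  match k return A k -> A k with
  | 0 => fun x : nat => x.+1
  | S k' => fun f =>
      exist _ (fun x n => omap (Sval k') (proj1_sig f x n)) (map_ok _ _ (proj2_sig f))
  end.

(* a default element of Tup j (only used out of range) *)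
Fixpoint Tdef (j : nat) : Tup j :=
  match j return Tup j with
  | 0 => 0
  | S j' => (Tdef j', Kval j'.+1)
  end.

(* projection of a tuple of Tup m onto its first j+1 components (j <= m) *)
Fixpoint proj (j m : nat) : Tup m -> Tup j :=
  match m return Tup m -> Tup j with
  | 0 => fun t =>
      match Nat.eq_dec j 0 with
      | left e => eq_rect_r Tup t e
      | right _ => Tdef j
      end
  | S m' => fun t =>
      match Nat.eq_dec j (S m') with
      | left e => eq_rect_r Tup t e
      | right _ => proj j m' (fst (t : Tup m' * A m'.+1))
      end
  end.

Definition lastc (k : nat) : Tup k -> A k :=
  match k return Tup k -> A k with
  | 0 => fun t => t
  | S k' => fun t => snd (t : Tup k' * A k'.+1)
  end.

Definition in_b {k : nat} (f : A k.+1) : Prop :=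
  forall n, exists c, app f [::] n = Some c.

Definition in_l {k : nat} (f : A k.+1) : Prop :=
  exists xi : nat -> A k -> A k,
    (forall n, bijective (xi n)) /\
    forall (x : D k) (n : nat),
      app f x n = if n < size x then Some (xi n (lastc k (nth (Tdef k) x n))) else None.

(* terms indexed by their type; type k.+1 objects are indexed by k *)
Inductive term : nat -> Type :=
| tvar   : nat -> term 0
| tvarF  : forall k, nat -> term k.+1            (* F^{k+1}_i  functionals *)
| tvarA  : forall k, nat -> term k.+1            (* A^{k+1}_i  lawlike *)
| tvarL  : forall k, nat -> term k.+1            (* \mathcal F^{k+1}_i lawless *)
| tzero  : term 0
| tK     : forall k, term k.+1
| tS     : term 0 -> term 0
| tplus  : term 0 -> term 0 -> term 0
| tmult  : term 0 -> term 0 -> term 0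
| tN     : forall k, term k.+1 -> term k.+1
| tAp    : forall k, term k.+1 -> term 0 -> term k.

Inductive form : Type :=
| fbot  : form
| feq   : forall n, term n -> term n -> form
| fand  : form -> form -> form
| for_  : form -> form -> form
| fimp  : form -> form -> form
| fall0 : nat -> form -> form
| fex0  : nat -> form -> form
| fallF : nat -> nat -> form -> form
| fexF  : nat -> nat -> form -> form
| fallA : nat -> nat -> form -> form
| fexA  : nat -> nat -> form -> form
| fallL : nat -> nat -> form -> form
| fexL  : nat -> nat -> form -> form.

Definition fneg (p : form) : form := fimp p fbot.

(* membership in L_s: every type index n satisfies 1 <= n <= s *)
Fixpoint wf_term (s : nat) {n : nat} (t : term n) : Prop :=
  match t with
  | tvar _ | tzero => True
  | tvarF k _ | tvarA k _ | tvarL k _ | tK k => k < s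
  | tS u => wf_term s u
  | tplus u v | tmult u v => wf_term s u /\ wf_term s v
  | tN k u => k < s /\ wf_term s u
  | tAp k u v => k < s /\ wf_term s u /\ wf_term s v
  end.

Fixpoint wf_form (s : nat) (p : form) : Prop :=
  match p with
  | fbot => True
  | feq _ t u => wf_term s t /\ wf_term s u
  | fand p q | for_ p q | fimp p q => wf_form s p /\ wf_form s q
  | fall0 _ p | fex0 _ p => wf_form s p
  | fallF k _ p | fexF k _ p | fallA k _ p | fexA k _ p
  | fallL k _ p | fexL k _ p => k < s /\ wf_form s p
  end.

Record env : Type := Env {
  eN : nat -> nat;
  eF : forall k, nat -> A k.+1;
  eA : forall k, nat -> A k.+1;
  eL : forall k, nat -> A k.+1 }.

Definition valid_env (s : nat) (r : env) : Prop :=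
  forall k i, k < s -> in_b (eA r k i) /\ in_l (eL r k i).

Definition updfam (g : forall k, nat -> A k.+1) (k i : nat) (f : A k.+1) :
  forall k, nat -> A k.+1 :=
  fun k' i' =>
    match Nat.eq_dec k k' with
    | left e => if i' == i then eq_rect k (fun j => A j.+1) f k' e else g k' i'
    | right _ => g k' i'
    end.

Definition updN (r : env) (i n : nat) : env :=
  Env (fun i' => if i' == i then n else eN r i') (eF r) (eA r) (eL r).
Definition updF (r : env) (k i : nat) (f : A k.+1) : env :=
  Env (eN r) (updfam (eF r) k i f) (eA r) (eL r).
Definition updA (r : env) (k i : nat) (f : A k.+1) : env :=
  Env (eN r) (eF r) (updfam (eA r) k i f) (eL r).
Definition updL (r : env) (k i : nat) (f : A k.+1) : env :=
  Env (eN r) (eF r) (eA r) (updfam (eL r) k i f).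

Definition node (s : nat) : Type := D s.-1.

(* value of a term at a node alpha; Ap^{k+1}(f,n) = f(\bar alpha(k+1), n) *)
Fixpoint teval (s : nat) {n : nat} (t : term n) (r : env) (alpha : node s)
  : option (A n) :=
  match t in term n return option (A n) with
  | tvar i => Some (eN r i)
  | tvarF k i => Some (eF r k i)
  | tvarA k i => Some (eA r k i)
  | tvarL k i => Some (eL r k i)
  | tzero => Some 0
  | tK k => Some (Kval k.+1)
  | tS u => omap S (teval s u r alpha)
  | tplus u v =>
      match teval s u r alpha, teval s v r alpha with
      | Some a, Some b => Some (a + b) | _, _ => None end
  | tmult u v =>
      match teval s u r alpha, teval s v r alpha with
      | Some a, Some b => Some (a * b) | _, _ => None end
  | tN k u => omap (Sval k.+1) (teval s u r alpha)
  | tAp k u v =>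
      match teval s u r alpha, teval s v r alpha with
      | Some f, Some m => app f (map (proj k s.-1) alpha) m
      | _, _ => None end
  end.

Definition Val (s : nat) {n : nat} (t u : term n) (r : env) (alpha : node s) : Prop :=
  exists a, teval s t r alpha = Some a /\ teval s u r alpha = Some a.

Fixpoint forces (s : nat) (p : form) (r : env) (alpha : node s) {struct p} : Prop :=
  match p with
  | fbot => False
  | feq n t u =>
      forall beta : nat -> Tup s.-1, init beta (size alpha) = alpha ->
        exists m, Val s t u r (init beta m)
  | fand p q => forces s p r alpha /\ forces s q r alpha
  | for_ p q =>
      forall beta : nat -> Tup s.-1, init beta (size alpha) = alpha ->
        exists m, forces s p r (init beta m) \/ forces s q r (init beta m)
  | fimp p q =>
      forall gamma : node s, prefix alpha gamma ->
        forces s p r gamma -> forces s q r gamma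
  | fall0 i p => forall n : nat, forces s p (updN r i n) alpha
  | fex0 i p =>
      forall beta : nat -> Tup s.-1, init beta (size alpha) = alpha ->
        exists m, exists n : nat, forces s p (updN r i n) (init beta m)
  | fallF k i p => forall f : A k.+1, forces s p (updF r k i f) alpha
  | fexF k i p =>
      forall beta : nat -> Tup s.-1, init beta (size alpha) = alpha ->
        exists m, exists f : A k.+1, forces s p (updF r k i f) (init beta m)
  | fallA k i p => forall f : A k.+1, in_b f -> forces s p (updA r k i f) alpha
  | fexA k i p =>
      forall beta : nat -> Tup s.-1, init beta (size alpha) = alpha ->
        exists m, exists f : A k.+1, in_b f /\ forces s p (updA r k i f) (init beta m)
  | fallL k i p => forall f : A k.+1, in_l f -> forces s p (updL r k i f) alpha
  | fexL k i p =>
      forall beta : nat -> Tup s.-1, init beta (size alpha) = alpha ->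
        exists m, exists f : A k.+1, in_l f /\ forces s p (updL r k i f) (init beta m)
  end.

(* B_s ||- p  iff  the root epsilon = <<>,...,<>> forces p *)
Definition Bforces (s : nat) (p : form) (r : env) : Prop := forces s p r [::].

(* Take for phi(x) the atomic formula F(x) = 1, where F is the lawless sequence of
   type 1 that reads off the number component of the successive steps of the path
   (nu_1 of the identity).  Along any path, F(n) is decided at the node of length
   n + 1, so phi is decidable; every node can be extended by a step with number
   component 1, so no node forces "there is no x with phi(x)"; but along the path
   whose number components are all 0, F never takes the value 1, so the root does
   not force "there is an x with phi(x)".  Markov's principle then fails because an
   implication forced at the root with forced premises yields a forced conclusion. *)
From mathcomp Require Import all_boot.
From Stdlib Require Import PeanoNat.

Lemma Kval_in_b k : in_b (Kval k.+1).
Proof. by move=> n; eexists. Qed.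

Definition nu_id_fun (k : nat) : seq (Tup k) -> nat -> option (A k) :=
  fun x n => if n < size x then Some (lastc k (nth (Tdef k) x n)) else None.

Lemma nu_id_fun_ok k : monotonic (nu_id_fun k) /\ complete (nu_id_fun k).
Proof.
split.
- move=> x y [z ->] n b; rewrite /nu_id_fun size_cat.
  case: ifP => // ltnx [<-].
  by rewrite (leq_trans ltnx (leq_addr _ _)) nth_cat ltnx.
- move=> beta n; exists n.+1; rewrite /nu_id_fun /init size_mkseq ltnSn.
  by eexists.
Qed.

Definition nu_id (k : nat) : A k.+1 := exist _ (nu_id_fun k) (nu_id_fun_ok k).

Lemma nu_id_in_l k : in_l (nu_id k).
Proof. by exists (fun _ x => x); split => // n; exists id. Qed.

Fixpoint tup_const (j c : nat) : Tup j :=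
  match j return Tup j with
  | 0 => c
  | S j' => (tup_const j' c, Kval j'.+1)
  end.

Lemma proj0_tup_const j c : proj 0 j (tup_const j c) = c.
Proof.
elim: j => [|j IH] /=; first by case: (Nat.eq_dec 0 0).
by case: (Nat.eq_dec 0 j.+1).
Qed.

Definition env0 : env :=
  Env (fun _ => 0) (fun k _ => Kval k.+1) (fun k _ => Kval k.+1) (fun k _ => nu_id k).

Lemma valid_env0 s : valid_env s env0.
Proof. by move=> k i _; split; [exact: Kval_in_b | exact: nu_id_in_l]. Qed.

Definition lawless_eq1 : form := feq 0 (tAp 0 (tvarL 0 0) (tvar 0)) (tS tzero).

Lemma wf_lawless_eq1 s : 1 <= s -> wf_form s lawless_eq1.
Proof. by []. Qed.

Lemma Val_lawless_eq1 s n (alpha : node s) (d : Tup s.-1) :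
  Val s (tAp 0 (tvarL 0 0) (tvar 0)) (tS tzero) (updN env0 0 n) alpha <->
  n < size alpha /\ proj 0 s.-1 (nth d alpha n) = 1.
Proof.
rewrite /Val /= /app /= /nu_id_fun size_map.
case: ifP => [ltn_alpha | _]; last by split => [[a []] | []].
rewrite (nth_map d) //=.
by split => [[a [[->] [<-]]] | [_ ->]]; last exists 1.
Qed.

Lemma Val_forces_eq s n (t u : term n) r (alpha : node s) :
  Val s t u r alpha -> forces s (feq n t u) r alpha.
Proof. by move=> Vtu beta beta_alpha; exists (size alpha); rewrite beta_alpha. Qed.

Lemma forces_imp_root s p q r : Bforces s (fimp p q) r -> Bforces s p r -> Bforces s q r.
Proof. by move=> forces_pq; apply: forces_pq; exists [::]. Qed.

(* The default [d] is irrelevant: the path through [gamma] that continues with [d]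
   reaches F(n) = 1 only at a node where the n-th step is [nth d gamma n]. *)
Lemma forces_lawless_eq1_nth s n (gamma : node s) (d : Tup s.-1) :
  forces s lawless_eq1 (updN env0 0 n) gamma -> proj 0 s.-1 (nth d gamma n) = 1.
Proof.
move=> /(_ (nth d gamma) (mkseq_nth d gamma)) [m /(Val_lawless_eq1 _ _ _ d)].
by rewrite size_mkseq => -[ltnm]; rewrite nth_mkseq.
Qed.

Section LawlessEq1.

Variable s : nat.

Let d0 : Tup s.-1 := tup_const s.-1 0.

Lemma forces_lawless_eq1_decidable :
  Bforces s (fall0 0 (for_ lawless_eq1 (fneg lawless_eq1))) env0.
Proof.
move=> n beta _; exists n.+1.
have ltn_init : n < size (init beta n.+1) by rewrite size_mkseq.
have nth_init : nth d0 (init beta n.+1) n = beta n by rewrite nth_mkseq.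
case E: (proj 0 s.-1 (beta n) == 1); [left | right].
- by apply/Val_forces_eq/(Val_lawless_eq1 _ _ _ d0); rewrite nth_init (eqP E).
- move=> gamma [z ->] /(forces_lawless_eq1_nth _ _ _ d0).
  by rewrite nth_cat ltn_init nth_init => beta_n1; rewrite beta_n1 in E.
Qed.

Lemma forces_nn_ex_lawless_eq1 : Bforces s (fneg (fneg (fex0 0 lawless_eq1))) env0.
Proof.
move=> gamma _ no_ex; set gamma1 := gamma ++ [:: tup_const s.-1 1].
have ltn_gamma1 : size gamma < size gamma1 by rewrite size_cat addn1.
apply: (no_ex gamma1); first by eexists.
move=> beta beta_gamma1; exists (size gamma1), (size gamma); rewrite beta_gamma1.
apply/Val_forces_eq/(Val_lawless_eq1 _ _ _ d0); split => //.
by rewrite nth_cat ltnn subnn proj0_tup_const.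
Qed.

Lemma not_forces_ex_lawless_eq1 : ~ Bforces s (fex0 0 lawless_eq1) env0.
Proof.
move=> /(_ (fun _ => d0) erefl) [m [n /(forces_lawless_eq1_nth _ _ _ d0)]].
have -> : nth d0 (init (fun=> d0) m) n = d0.
  by case: (ltnP n m) => ?; [rewrite nth_mkseq | rewrite nth_default ?size_mkseq].
by rewrite proj0_tup_const.
Qed.

End LawlessEq1.

Theorem theorem11p3 (s : nat) (hs : 1 <= s) :
  (* (1) failure of the Markov rule *)
  (exists (phi : form) (x : nat) (r : env),
      wf_form s phi /\ valid_env s r /\
      Bforces s (fall0 x (for_ phi (fneg phi))) r /\
      Bforces s (fneg (fneg (fex0 x phi))) r /\
      ~ Bforces s (fex0 x phi) r) /\
  (* (2) failure of Markov's principle, for such a phi *)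
  (forall (phi : form) (x : nat) (r : env),
      wf_form s phi -> valid_env s r ->
      Bforces s (fall0 x (for_ phi (fneg phi))) r ->
      Bforces s (fneg (fneg (fex0 x phi))) r ->
      ~ Bforces s (fex0 x phi) r ->
      ~ Bforces s (fimp (fand (fall0 x (for_ phi (fneg phi)))
                              (fneg (fneg (fex0 x phi))))
                        (fex0 x phi)) r).
Proof.
split.
- exists lawless_eq1, 0, env0; split; first exact: wf_lawless_eq1.
  split; first exact: valid_env0.
  split; first exact: forces_lawless_eq1_decidable.
  split; [exact: forces_nn_ex_lawless_eq1 | exact: not_forces_ex_lawless_eq1].
- move=> phi x r _ _ dec nn_ex not_ex markov.
  exact/not_ex/(forces_imp_root _ _ _ _ markov (conj dec nn_ex)).
Qed.
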